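(* Let $(R,\mathfrak m,k)$ be a commutative noetherian local ring. Let $A$ and $L$ be $R$-modules such that $A$ is artinian and $\mathfrak m^n\Gamma_{\mathfrak m}(L)=0$ for some $n\geq 1$. Fix an index $t\geq 0$ such that $\mathfrak m^tA=\mathfrak m^{t+1}A$, and let $s$ be an integer with $s\geq\min(n,t)$. Then $\operatorname{len}_R(\operatorname{Hom}_R(A,L))\leq\beta^R_0(A)\,\operatorname{len}_R(0:_L\mathfrak m^s)$, with the convention $0\cdot\infty=0$.
   Context: $\Gamma_{\mathfrak m}(L)=\{x\in L: \mathfrak m^nx=0 \text{ for } n\gg0\}$; $\beta^R_0(A)=\operatorname{len}_R(k\otimes_RA)$; $(0:_L\mathfrak m^s)=\{x\in L:\mathfrak m^sx=0\}$. *)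

From HB Require Import structures.
From mathcomp Require Import all_boot all_order all_algebra.
From mathcomp Require Import boolp classical_sets functions.
Set Implicit Arguments. Unset Strict Implicit. Unset Printing Implicit Defensive.
Import Order.TTheory GRing.Theory Num.Theory.
Local Open Scope ring_scope.

Section Defs.
Variable R : comNzRingType.

Definition is_ideal (I : R -> Prop) : Prop :=
  I 0 /\ (forall x y, I x -> I y -> I (x + y)) /\ (forall r x, I x -> I (r * x)).

Definition is_maximal_ideal (I : R -> Prop) : Prop :=
  is_ideal I /\ ~ I 1 /\
  forall J, is_ideal J -> (forall x, I x -> J x) -> ~ J 1 -> forall x, J x -> I x.

Definition is_local_with (m : R -> Prop) : Prop :=
  is_maximal_ideal m /\ forall J, is_maximal_ideal J -> forall x, J x <-> m x.

Definition noetherian_ring : Prop :=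
  forall I : nat -> R -> Prop, (forall i, is_ideal (I i)) ->
  (forall i x, I i x -> I i.+1 x) ->
  exists k, forall i, (k <= i)%N -> forall x, I i x -> I k x.

Definition ideal_mul (I J : R -> Prop) : R -> Prop := fun r =>
  exists (p : nat) (a b : 'I_p -> R),
    (forall i, I (a i)) /\ (forall i, J (b i)) /\ r = \sum_(i < p) a i * b i.

Fixpoint ideal_pow (m : R -> Prop) (j : nat) : R -> Prop :=
  if j is j'.+1 then ideal_mul (ideal_pow m j') m else (fun _ => True).

Section Modules.
Variable V : lmodType R.

Definition is_submodule (N : V -> Prop) : Prop :=
  N 0 /\ (forall x y, N x -> N y -> N (x + y)) /\ (forall r x, N x -> N (r *: x)).

Definition ideal_smul (I : R -> Prop) (N : V -> Prop) : V -> Prop := fun v =>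
  exists (p : nat) (a : 'I_p -> R) (x : 'I_p -> V),
    (forall i, I (a i)) /\ (forall i, N (x i)) /\ v = \sum_(i < p) a i *: x i.

Definition whole : V -> Prop := fun _ => True.
Definition zero_sub : V -> Prop := fun v => v = 0.

Definition artinian_module : Prop :=
  forall N : nat -> V -> Prop, (forall i, is_submodule (N i)) ->
  (forall i x, N i.+1 x -> N i x) ->
  exists k, forall i, (k <= i)%N -> forall x, N k x -> N i x.

Definition torsion_m (m : R -> Prop) : V -> Prop := fun x =>
  exists n, forall a, ideal_pow m n a -> a *: x = 0.

Definition annihilated_by (m : R -> Prop) (s : nat) : V -> Prop := fun x =>
  forall a, ideal_pow m s a -> a *: x = 0.

(* a strictly increasing chain of n+1 submodules, all lying between N and M;
   its existence means the R-module M/N has a composition-type chain of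
   length n, so the length of M/N is the supremum of such n. *)
Definition chain_between (N M : V -> Prop) (n : nat) : Prop :=
  exists c : nat -> V -> Prop,
    (forall i, is_submodule (c i)) /\
    (forall i x, (i <= n)%N -> N x -> c i x) /\
    (forall i x, (i <= n)%N -> c i x -> M x) /\
    (forall i, (i < n)%N -> (forall x, c i x -> c i.+1 x) /\
                            exists x, c i.+1 x /\ ~ c i x).

Definition length_bounded_by (N M : V -> Prop) (b : nat) : Prop :=
  forall n, chain_between N M n -> (n <= b)%N.

(* length of the R-module M/N, in nat extended by None = infinity *)
Definition len_quot (N M : V -> Prop) : option nat :=
  match pselect (exists b, length_bounded_by N M b) with
  | left h =>
      Some (@ex_minn (fun b => `[< length_bounded_by N M b >])
              (let: ex_intro b hb := h in ex_intro _ b (asboolT hb)))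
  | right _ => None
  end.

Definition len_sub (M : V -> Prop) : option nat := len_quot zero_sub M.
End Modules.

(* Hom_R(A, L), as the submodule of R-linear maps in the R-module A -> L *)
Definition Hom_sub (A L : lmodType R) : (A -> L) -> Prop := fun f =>
  forall (r : R) (x y : A), f (r *: x + y) = r *: f x + f y.

End Defs.

(* extended naturals: None = infinity, with 0 * infinity = 0 *)
Definition emul (a b : option nat) : option nat :=
  match a, b with
  | Some 0, _ | _, Some 0 => Some 0
  | Some x, Some y => Some (x * y)%N
  | _, _ => None
  end.

Definition ele (a b : option nat) : Prop :=
  match a, b with
  | _, None => True
  | None, Some _ => False
  | Some x, Some y => (x <= y)%N
  end.

From HB Require Import structures.
From mathcomp Require Import all_boot all_order all_algebra.
From mathcomp Require Import boolp classical_sets functions.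
Set Implicit Arguments. Unset Strict Implicit. Unset Printing Implicit Defensive.
Import GRing.Theory.
Local Open Scope ring_scope.
Local Open Scope classical_set_scope.

(* Over a noetherian local ring every element [x] of an artinian module is
   killed by a power of [m]: the chain [m^j x] becomes stationary at some
   [m^k x], which is finitely generated and equal to [m (m^k x)], hence zero by
   Nakayama.  So a homomorphism [f : A -> L] lands in [Gamma_m(L)] and kills
   [m^n A]; since [m^t A = m^(t+j) A] for all [j], it also kills [m^s A], i.e.
   takes values in [(0 :_L m^s)].  Pick [y_1, ..., y_b], [b = len (A / mA)],
   generating [A] modulo [mA] (greedily, along a strictly increasing chain
   [mA < mA + R y_1 < ...]).  A homomorphism vanishing at every [y_i] has an
   image [I] with [I = m I = m^n I = 0], so [f |-> (f y_i)_i] embeds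
   [Hom(A, L)] into [(0 :_L m^s)^b], and length is subadditive along kernels
   and images. *)

Definition finsum_span {X Y : Type} {V : zmodType} (op : X -> Y -> V)
  (P : X -> Prop) (Q : Y -> Prop) : V -> Prop := fun v =>
  exists p (a : 'I_p -> X) (x : 'I_p -> Y),
    (forall i, P (a i)) /\ (forall i, Q (x i)) /\ v = \sum_(i < p) op (a i) (x i).

Section FinsumSpan.
Variables (X Y : Type) (V : zmodType) (op : X -> Y -> V).
Variables (P : X -> Prop) (Q : Y -> Prop).

Lemma finsum_span_ind (S : V -> Prop) : S 0 -> (forall u w, S u -> S w -> S (u + w)) ->
  (forall a x, P a -> Q x -> S (op a x)) -> forall v, finsum_span op P Q v -> S v.
Proof.
move=> S0 SD Sop v [p [a [x [Pa [Qx ->]]]]].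
elim: p a x Pa Qx => [|p IHp] a x Pa Qx; first by rewrite big_ord0.
rewrite big_ord_recr /=; apply: SD; last exact: Sop.
exact: (IHp (fun i => a (widen_ord (leqnSn p) i)) (fun i => x (widen_ord (leqnSn p) i))).
Qed.

Lemma finsum_span0 : finsum_span op P Q 0.
Proof.
exists 0%N, (fun i : 'I_0 => False_rect _ (notF (ltn_ord i))),
  (fun i : 'I_0 => False_rect _ (notF (ltn_ord i))).
by split; [case|split; [case|rewrite big_ord0]].
Qed.

Lemma finsum_span1 a x : P a -> Q x -> finsum_span op P Q (op a x).
Proof.
by move=> Pa Qx; exists 1%N, (fun _ => a), (fun _ => x); rewrite big_ord1.
Qed.

Lemma finsum_spanD u w :
  finsum_span op P Q u -> finsum_span op P Q w -> finsum_span op P Q (u + w).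
Proof.
move=> [p [a [x [Pa [Qx ->]]]]] [q [b [y [Pb [Qy ->]]]]].
pose glue T (f : 'I_p -> T) (g : 'I_q -> T) i :=
  match fintype.split i with inl j => f j | inr j => g j end.
exists (p + q)%N, (glue _ a b), (glue _ x y).
split; first by move=> i; rewrite /glue; case: (fintype.split i).
split; first by move=> i; rewrite /glue; case: (fintype.split i).
rewrite big_split_ord /=; congr (_ + _); apply: eq_bigr => i _.
  by rewrite /glue (unsplitK (inl _ i)).
by rewrite /glue (unsplitK (inr _ i)).
Qed.

End FinsumSpan.

Section Ideals.
Variable R : comNzRingType.
Implicit Types (I m : R -> Prop).

Lemma ideal_pow_ideal m k : is_ideal m -> is_ideal (ideal_pow m k).
Proof.
move=> idm; elim: k => [|k [_ [_ powkM]]] //=.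
split; first exact: finsum_span0.
split; first by move=> x y; apply: finsum_spanD.
move=> r; apply: finsum_span_ind.
- by rewrite mulr0; apply: finsum_span0.
- by move=> u w Hu Hw; rewrite mulrDr; apply: finsum_spanD.
- by move=> a b Ha Hb; rewrite mulrA; apply: finsum_span1 => //; apply: powkM.
Qed.

Lemma ideal_pow_antitone m k l : is_ideal m -> (k <= l)%N ->
  ideal_pow m l `<=` ideal_pow m k.
Proof.
move=> idm; elim: l => [|l IHl]; first by rewrite leqn0 => /eqP->.
rewrite leq_eqVlt => /orP[/eqP-> //|/IHl sub_l]; apply: subset_trans sub_l.
have [powl0 [powlD powlM]] := ideal_pow_ideal l idm.
by apply: finsum_span_ind => // a b powl_a _; rewrite mulrC; apply: powlM.
Qed.

Lemma ideal_sum I r (F : nat -> R) : is_ideal I -> (forall i, I (F i)) ->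
  I (\sum_(i < r) F i).
Proof.
move=> [I0 [ID _]] IF; elim: r => [|r IHr]; first by rewrite big_ord0.
by rewrite big_ord_recr /=; apply: ID.
Qed.

Section Submodules.
Variable V : lmodType R.
Implicit Types (N W : V -> Prop).

Lemma submoduleN W x : is_submodule W -> W x -> W (- x).
Proof. by move=> [_ [_ WZ]] Wx; rewrite -scaleN1r; apply: WZ. Qed.

Lemma ideal_smul_submodule I N : is_ideal I -> is_submodule (ideal_smul I N).
Proof.
move=> [_ [_ IM]]; split; first exact: finsum_span0.
split; first by move=> x y; apply: finsum_spanD.
move=> r; apply: finsum_span_ind.
- by rewrite scaler0; apply: finsum_span0.
- by move=> u w Hu Hw; rewrite scalerDr; apply: finsum_spanD.
- by move=> a x Ia Nx; rewrite scalerA; apply: finsum_span1 => //; apply: IM.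
Qed.

Lemma ideal_smul_least I N W : is_submodule W ->
  (forall a x, I a -> N x -> W (a *: x)) -> ideal_smul I N `<=` W.
Proof. by move=> [W0 [WD _]] IN_W; apply: finsum_span_ind. Qed.

Lemma ideal_smul_monol I I' N : I `<=` I' -> ideal_smul I N `<=` ideal_smul I' N.
Proof.
by move=> II' v [p [a [x [Ia [Nx ->]]]]]; exists p, a, x; split=> [i|//]; apply: II'.
Qed.

Lemma ideal_smul_monor I N N' : N `<=` N' -> ideal_smul I N `<=` ideal_smul I N'.
Proof.
by move=> NN' v [p [a [x [Ia [Nx ->]]]]]; exists p, a, x; do 2!split=> //; move=> i; apply: NN'.
Qed.

Lemma ideal_smul_powS m k N : is_ideal m ->
  ideal_smul (ideal_pow m k.+1) N = ideal_smul m (ideal_smul (ideal_pow m k) N).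
Proof.
move=> idm; have idmk := ideal_pow_ideal k idm.
apply/seteqP; split; apply: ideal_smul_least.
- exact: ideal_smul_submodule.
- move=> a x powk1_a Nx; have [_ [SD _]] := ideal_smul_submodule (ideal_smul (ideal_pow m k) N) idm.
  move: a powk1_a; apply: finsum_span_ind; first by rewrite scale0r; apply: finsum_span0.
    by move=> u w Hu Hw; rewrite scalerDl; apply: SD.
  by move=> c b powk_c mb; rewrite mulrC -scalerA; apply: finsum_span1 => //; exact: finsum_span1.
- exact/ideal_smul_submodule/ideal_pow_ideal.
- move=> b w mb; have [_ [SD _]] := ideal_smul_submodule N (ideal_pow_ideal k.+1 idm).
  move: w; apply: finsum_span_ind; first by rewrite scaler0; apply: finsum_span0.
    by move=> u w Hu Hw; rewrite scalerDr; apply: SD.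
  by move=> a x powk_a Nx; rewrite scalerA mulrC; apply: finsum_span1 => //; exact: finsum_span1.
Qed.

Lemma ideal_smul_pow_fix m N j :
  is_ideal m -> N `<=` ideal_smul m N -> N `<=` ideal_smul (ideal_pow m j) N.
Proof.
move=> idm N_mN; elim: j => [|j IHj] v Nv; first by rewrite -[v]scale1r; apply: finsum_span1.
by rewrite ideal_smul_powS //; apply: ideal_smul_monor IHj _ (N_mN v Nv).
Qed.

Lemma zero_submodule : is_submodule (@zero_sub R V).
Proof.
split=> //; split; first by move=> x y -> ->; rewrite addr0.
by move=> r x ->; rewrite scaler0.
Qed.

Lemma annihilated_by_submodule m s : is_submodule (annihilated_by m s : V -> Prop).
Proof.
split; first by move=> a _; rewrite scaler0.
split; first by move=> x y ann_x ann_y a powa; rewrite scalerDr ann_x ?ann_y ?addr0.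
by move=> r x ann_x a powa; rewrite scalerA mulrC -scalerA ann_x // scaler0.
Qed.

End Submodules.

Section Homomorphisms.
Variables (V W : lmodType R) (f : V -> W).
Hypothesis f_hom : Hom_sub f.

Lemma hom0 : f 0 = 0.
Proof.
have := f_hom 1 0 0; rewrite scaler0 addr0 scale1r => /(congr1 (fun z => z - f 0)).
by rewrite addrK subrr.
Qed.

Lemma homD x y : f (x + y) = f x + f y.
Proof. by have := f_hom 1 x y; rewrite !scale1r. Qed.

Lemma homZ r x : f (r *: x) = r *: f x.
Proof. by have := f_hom r x 0; rewrite addr0 hom0 addr0. Qed.

Lemma ideal_smul_hom I N v : ideal_smul I N v -> ideal_smul I (f @` N) (f v).
Proof.
move: v; apply: finsum_span_ind.
- by rewrite hom0; apply: finsum_span0.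
- by move=> u w Hu Hw; rewrite homD; apply: finsum_spanD.
- by move=> a x Ia Nx; rewrite homZ; apply: finsum_span1 => //; exists x.
Qed.

Lemma hom_ker_submodule N : is_submodule N -> is_submodule (N `&` [set x | f x = 0]).
Proof.
move=> [N0 [ND NZ]]; split; first by split; last exact: hom0.
split; first by move=> x y [Nx fx] [Ny fy]; split; [apply: ND|rewrite /= homD fx fy addr0].
by move=> r x [Nx fx]; split; [apply: NZ|rewrite /= homZ fx scaler0].
Qed.

Lemma hom_image_submodule N : is_submodule N -> is_submodule (f @` N).
Proof.
move=> [N0 [ND NZ]]; split; first by exists 0 => //; rewrite hom0.
split; first by move=> _ _ [x Nx <-] [y Ny <-]; exists (x + y); [apply: ND|rewrite homD].
by move=> r _ [x Nx <-]; exists (r *: x); [apply: NZ|rewrite homZ].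
Qed.

End Homomorphisms.
End Ideals.

Section LocalRings.
Variable R : comNzRingType.
Implicit Types (I J m : R -> Prop).

Lemma noetherian_maximal_element (S : (R -> Prop) -> Prop) :
  noetherian_ring R -> (forall I, S I -> is_ideal I) -> forall J, S J ->
  exists2 I, S I & forall K, S K -> I `<=` K -> K `<=` I.
Proof.
move=> noethR S_ideal J SJ; apply: contrapT => no_max.
have grow I : S I -> exists K, S K /\ I `<=` K /\ exists x, K x /\ ~ I x.
  move=> SI; apply: contrapT => no_grow; apply: no_max; exists I => // K SK IK x Kx.
  by apply: contrapT => Ix; apply: no_grow; exists K; split=> //; split=> //; exists x.
pose next I := if pselect (exists K, S K /\ I `<=` K /\ exists x, K x /\ ~ I x)
  is left h then projT1 (cid h) else I.
have nextP I : S I -> S (next I) /\ I `<=` next I /\ exists x, next I x /\ ~ I x.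
  by move=> /grow h; rewrite /next; case: pselect => // h'; case: (cid h').
pose c i := iter i next J.
have Sc i : S (c i) by elim: i => //= i /nextP [].
have [k stable] := noethR c (fun i => S_ideal _ (Sc i)) (fun i => (nextP _ (Sc i)).2.1).
have [_ [_ [x [ck1x ckx]]]] := nextP _ (Sc k).
by apply: ckx; apply: (stable k.+1).
Qed.

Lemma proper_ideal_sub_maximal J : noetherian_ring R -> is_ideal J -> ~ J 1 ->
  exists2 M, is_maximal_ideal M & J `<=` M.
Proof.
move=> noethR idJ J1.
have [M [idM [M1 JM]] maxM] :=
  noetherian_maximal_element (S := fun K => is_ideal K /\ ~ K 1 /\ J `<=` K)
    noethR (fun _ h => h.1) (conj idJ (conj J1 (@subset_refl _ J))).
exists M => //; split=> //; split=> // K idK MK K1.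
by apply: maxM => //; split=> //; split=> //; apply: subset_trans MK.
Qed.

Lemma local_one_sub_unit m : noetherian_ring R -> is_local_with m ->
  forall a, m a -> exists u, u * (1 - a) = 1.
Proof.
move=> noethR [[[m0 [mD _]] [m1 _]] only_m] a ma.
pose J y := exists r, y = r * (1 - a).
have [[r r1]|J1] := pselect (J 1); first by exists r; rewrite -r1.
have idJ : is_ideal J.
  split; first by exists 0; rewrite mul0r.
  split; first by move=> x y [r ->] [r' ->]; exists (r + r'); rewrite mulrDl.
  by move=> s x [r ->]; exists (s * r); rewrite mulrA.
have [M maxM JM] := proper_ideal_sub_maximal noethR idJ J1.
have m1a : m (1 - a) by apply/(only_m M maxM)/JM; exists 1; rewrite mul1r.
by case: m1; have := mD _ _ m1a ma; rewrite subrK.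
Qed.

End LocalRings.

Section Greedy.
Variables (R : comNzRingType) (V : lmodType R) (T X0 : V -> Prop).

Definition greedy_pick (X : V -> Prop) : V :=
  if pselect (exists y, T y /\ ~ X y) is left h then projT1 (cid h) else 0.

Fixpoint greedy_chain i : V -> Prop :=
  if i is i'.+1 then
    fun v => exists w r, greedy_chain i' w /\ v = w + r *: greedy_pick (greedy_chain i')
  else X0.

Lemma greedy_pickP X : (exists y, T y /\ ~ X y) -> T (greedy_pick X) /\ ~ X (greedy_pick X).
Proof. by rewrite /greedy_pick; case: pselect => // h _; case: (cid h). Qed.

Lemma greedy_pick_in X : T 0 -> T (greedy_pick X).
Proof. by rewrite /greedy_pick; case: pselect => // h _; case: (cid h) => y []. Qed.

Lemma greedy_chainS i : greedy_chain i `<=` greedy_chain i.+1.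
Proof. by move=> x Gx; exists x, 0; rewrite scale0r addr0. Qed.

Lemma greedy_chain_mono i j : (i <= j)%N -> greedy_chain i `<=` greedy_chain j.
Proof.
elim: j => [|j IHj]; first by rewrite leqn0 => /eqP->.
rewrite leq_eqVlt => /orP[/eqP-> //|/IHj Gij].
exact: subset_trans Gij (@greedy_chainS j).
Qed.

Lemma greedy_chain_repr i v : greedy_chain i v ->
  exists w (c : nat -> R), X0 w /\ v = w + \sum_(p < i) c p *: greedy_pick (greedy_chain p).
Proof.
elim: i v => [|i IHi] v /=; first by exists v, (fun _ => 0); rewrite big_ord0 addr0.
move=> [_ [r [/IHi [w [c [X0w ->]]] ->]]].
exists w, (fun p => if p == i then r else c p); split => //.
rewrite big_ord_recr /= eqxx -addrA; congr (_ + (_ + _)).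
by apply: eq_bigr => p _; rewrite ltn_eqF.
Qed.

Hypothesis X0_submodule : is_submodule X0.

Lemma greedy_chain_submodule i : is_submodule (greedy_chain i).
Proof.
elim: i => [//|i [G0 [GD GZ]]]; split; first by exists 0, 0; rewrite scale0r addr0.
split.
  move=> _ _ [w [r [Gw ->]]] [w' [r' [Gw' ->]]].
  exists (w + w'), (r + r'); split; first exact: GD.
  by rewrite scalerDl addrACA.
move=> s _ [w [r [Gw ->]]]; exists (s *: w), (s * r); split; first exact: GZ.
by rewrite scalerDr scalerA.
Qed.

Lemma greedy_chain_pick i : greedy_chain i.+1 (greedy_pick (greedy_chain i)).
Proof.
have [G0 _] := greedy_chain_submodule i.
by exists 0, 1; rewrite scale1r add0r.
Qed.

Lemma greedy_chain_grows i : (exists y, T y /\ ~ greedy_chain i y) ->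
  exists x, greedy_chain i.+1 x /\ ~ greedy_chain i x.
Proof.
move=> /greedy_pickP [_ out]; exists (greedy_pick (greedy_chain i)); split=> //.
exact: greedy_chain_pick.
Qed.

End Greedy.

Section FinitelyGenerated.
Variable R : comNzRingType.

Lemma noetherian_ideal_fg (I : R -> Prop) : noetherian_ring R -> is_ideal I ->
  exists r (g : nat -> R), (forall i, I (g i)) /\
    forall x, I x -> exists c : nat -> R, x = \sum_(i < r) c i * g i.
Proof.
move=> noethR idI; have I0 : I 0 by case: idI.
have zero_sub_R := zero_submodule R^o.
pose G := @greedy_chain R R^o I (@zero_sub R R^o).
have [k stable] :=
  noethR G (@greedy_chain_submodule R R^o I _ zero_sub_R) (@greedy_chainS R R^o I _).
exists k, (fun p => @greedy_pick R R^o I (G p)).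
split=> [i|x Ix]; first exact: greedy_pick_in.
have Gkx : G k x.
  apply: contrapT => Gkx.
  have [y [Gk1y Gky]] := greedy_chain_grows zero_sub_R (ex_intro _ x (conj Ix Gkx)).
  by apply: Gky; apply: (stable k.+1).
by have [_ [c [-> ->]]] := greedy_chain_repr Gkx; exists c; rewrite add0r.
Qed.

End FinitelyGenerated.

Section Nakayama.
Variables (R : comNzRingType) (V : lmodType R).
Implicit Types (I P m : R -> Prop) (z : nat -> V).

Definition coef_span P z r : V -> Prop := fun v =>
  exists c : nat -> R, (forall i, P (c i)) /\ v = \sum_(i < r) c i *: z i.

Lemma setT_ideal : is_ideal (@setT R).
Proof. by []. Qed.

Lemma coef_span0 P z r : P 0 -> coef_span P z r 0.
Proof. by exists (fun _ => 0); split=> //; rewrite big1 // => i _; rewrite scale0r. Qed.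

Lemma coef_spanD P z r u w : (forall a b, P a -> P b -> P (a + b)) ->
  coef_span P z r u -> coef_span P z r w -> coef_span P z r (u + w).
Proof.
move=> PD [c [Pc ->]] [c' [Pc' ->]]; exists (fun i => c i + c' i).
split; first by move=> i; apply: PD.
by rewrite -big_split /=; apply: eq_bigr => i _; rewrite scalerDl.
Qed.

Lemma coef_span_widen P z r : P 0 -> coef_span P z r `<=` coef_span P z r.+1.
Proof.
move=> P0 _ [c [Pc ->]]; exists (fun i => if i == r then 0 else c i).
split; first by move=> i; case: (i == r).
rewrite big_ord_recr /= eqxx scale0r addr0; apply: eq_bigr => i _.
by rewrite ltn_eqF.
Qed.

Lemma coef_span_last z r : coef_span setT z r.+1 (z r).
Proof.
exists (fun i => if i == r then 1 else 0); split=> //.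
rewrite big_ord_recr /= eqxx scale1r big1 ?add0r // => i _.
by rewrite ltn_eqF // scale0r.
Qed.

Lemma coef_span_reduce P z r (e : nat -> R) : is_ideal P ->
  z r = \sum_(i < r) e i *: z i -> coef_span P z r.+1 `<=` coef_span P z r.
Proof.
move=> [_ [PD PM]] zr _ [c [Pc ->]]; exists (fun i => c i + e i * c r).
split; first by move=> i; apply: PD => //; apply: PM.
rewrite big_ord_recr /= zr scaler_sumr -big_split /=.
by apply: eq_bigr => i _; rewrite scalerA scalerDl mulrC.
Qed.

Lemma ideal_smul_coef_span m z r : is_ideal m ->
  ideal_smul m (coef_span setT z r) `<=` coef_span m z r.
Proof.
move=> [m0 [mD mM]]; apply: finsum_span_ind.
- exact: coef_span0.
- by move=> u w; apply: coef_spanD.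
- move=> b _ mb [c [_ ->]]; exists (fun i => c i * b); split; first by move=> i; apply: mM.
  by rewrite scaler_sumr; apply: eq_bigr => i _; rewrite scalerA mulrC.
Qed.

Lemma nakayama m : is_ideal m -> (forall a, m a -> exists u, u * (1 - a) = 1) ->
  forall r z, coef_span setT z r `<=` coef_span m z r -> coef_span setT z r `<=` [set 0].
Proof.
move=> idm unit_1m; elim=> [|r IHr] z span_m; first by move=> _ [c [_ ->]]; rewrite big_ord0.
have [a [ma za]] := span_m _ (coef_span_last z r).
have [u ua] := unit_1m _ (ma r).
have zr : z r = \sum_(i < r) (u * a i) *: z i.
  have : (1 - a r) *: z r = \sum_(i < r) a i *: z i.
    by rewrite scalerBl scale1r {1}za big_ord_recr /= addrK.
  move/(congr1 (fun w => u *: w)); rewrite scalerA ua scale1r => ->.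
  by rewrite scaler_sumr; apply: eq_bigr => i _; rewrite scalerA.
have reduce P : is_ideal P -> coef_span P z r.+1 `<=` coef_span P z r.
  by move=> idP; exact: (@coef_span_reduce P z r (fun i => u * a i) idP zr).
apply: subset_trans (reduce _ setT_ideal) (IHr z _).
apply: subset_trans (@coef_span_widen setT z r I) _.
exact: subset_trans span_m (reduce _ idm).
Qed.

Lemma ideal_smul1_coef_span I (g : nat -> R) r (x : V) : is_ideal I ->
  (forall i, I (g i)) -> (forall a, I a -> exists c : nat -> R, a = \sum_(i < r) c i * g i) ->
  ideal_smul I [set x] = coef_span setT (fun i => g i *: x) r.
Proof.
move=> idI Ig gen_g; apply/seteqP; split.
  apply: finsum_span_ind; [exact: coef_span0 | by move=> u w; apply: coef_spanD |].
  move=> a _ /gen_g [c ->] ->; exists c; split=> //.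
  by rewrite scaler_suml; apply: eq_bigr => i _; rewrite scalerA.
move=> _ [c [_ ->]]; rewrite (_ : \sum_(i < r) _ = (\sum_(i < r) c i * g i) *: x).
  apply: finsum_span1 => //; apply: (@ideal_sum R _ r (fun i => c i * g i) idI) => i.
  by case: idI => [_ [_ IM]]; apply: IM.
by rewrite scaler_suml; apply: eq_bigr => i _; rewrite scalerA.
Qed.

End Nakayama.

Lemma artinian_torsion (R : comNzRingType) (m : R -> Prop) (A : lmodType R) :
  noetherian_ring R -> is_local_with m -> artinian_module A -> forall x : A, torsion_m m x.
Proof.
move=> noethR localm artA x; have idm : is_ideal m by case: localm => [[]].
pose Nx j := ideal_smul (ideal_pow m j) [set x].
have [k stable] := artA Nx (fun j => ideal_smul_submodule [set x] (ideal_pow_ideal j idm))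
  (fun j => ideal_smul_monol (ideal_pow_antitone idm (leqnSn j))).
have [r [g [mk_g gen_g]]] := noetherian_ideal_fg noethR (ideal_pow_ideal k idm).
pose z i := g i *: x.
have Nk_span := ideal_smul1_coef_span x (ideal_pow_ideal k idm) mk_g gen_g.
have span_m : coef_span setT z r `<=` coef_span m z r.
  rewrite -Nk_span => v /(stable k.+1 (leqnSn k)).
  rewrite /Nx ideal_smul_powS // Nk_span; exact: ideal_smul_coef_span.
exists k => a mk_a; apply: (nakayama idm (local_one_sub_unit noethR localm) span_m).
by rewrite -Nk_span; apply: finsum_span1.
Qed.

Section StrictSteps.
Variable T : Type.
Implicit Types (c d : nat -> T -> Prop).

Definition strict_step c i : Prop := exists x, c i.+1 x /\ ~ c i x.

Fixpoint strict_steps c k : nat :=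
  if k is k'.+1 then (strict_steps c k' + `[< strict_step c k' >])%N else 0%N.

Definition strict_chain d n : Prop :=
  forall r, (r < n)%N -> d r `<=` d r.+1 /\ strict_step d r.

Lemma strict_steps_strict_chain c k : strict_chain c k -> strict_steps c k = k.
Proof.
elim: k => [//|k IHk] chain_c /=.
rewrite IHk ?asboolT ?addn1 //; first by case: (chain_c k (ltnSn k)).
by move=> r rk; apply: chain_c; apply: ltnW.
Qed.

Lemma strict_chain_extend d n X : strict_chain d n -> d n `<=` X -> (exists x, X x /\ ~ d n x) ->
  strict_chain (fun r => if r == n.+1 then X else d r) n.+1.
Proof.
move=> chain_d dX [x [Xx dx]] r; rewrite /strict_step ltnS leq_eqVlt => /orP[/eqP->|rn].
  by rewrite eqxx (ltn_eqF (ltnSn n)); split=> //; exists x.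
by rewrite eqSS !(ltn_eqF rn) (ltn_eqF (ltn_trans rn (ltnSn n))); apply: chain_d.
Qed.

Lemma strict_steps_chain c k : (forall i, (i < k)%N -> c i `<=` c i.+1) ->
  exists d, [/\ forall r, exists2 i, (i <= k)%N & d r = c i,
               strict_chain d (strict_steps c k) & d (strict_steps c k) = c k].
Proof.
elim: k => [|k IHk] mono_c; first by exists (fun _ => c 0%N); split=> // r; exists 0%N.
have [d [d_c chain_d dk]] := IHk (fun i ik => mono_c i (ltnW ik)).
have ck_sub := mono_c k (ltnSn k); rewrite /=.
have [step|no_step] := pselect (strict_step c k).
  rewrite asboolT // addn1; set n := strict_steps c k in chain_d dk *.
  exists (fun r => if r == n.+1 then c k.+1 else d r); split; last by rewrite eqxx.
  - move=> r; case: (r == n.+1); first by exists k.+1.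
    by have [i ik ->] := d_c r; exists i => //; apply: ltnW.
  - by apply: strict_chain_extend; rewrite ?dk.
rewrite asboolF // addn0; exists d; split=> //.
  by move=> r; have [i ik ->] := d_c r; exists i => //; apply: ltnW.
rewrite dk; apply/seteqP; split=> // x ck1x.
by apply: contrapT => ckx; apply: no_step; exists x.
Qed.

End StrictSteps.

Lemma strict_steps_le_add (T T1 T2 : Type) (c : nat -> T -> Prop)
  (c1 : nat -> T1 -> Prop) (c2 : nat -> T2 -> Prop) k :
  (forall i, (i < k)%N -> strict_step c i -> strict_step c1 i \/ strict_step c2 i) ->
  (strict_steps c k <= strict_steps c1 k + strict_steps c2 k)%N.
Proof.
elim: k => [//|k IHk] split_step /=; rewrite addnACA leq_add //.
  by apply: IHk => i ik; apply: split_step; apply: ltnW.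
have [step|no_step] := pselect (strict_step c k); last by rewrite asboolF.
rewrite (asboolT step).
by case: (split_step k (ltnSn k) step) => [/asboolT->|/asboolT->]; rewrite ?addn1.
Qed.

Section Length.
Variables (R : comNzRingType) (V : lmodType R).
Implicit Types (N M H : V -> Prop) (c : nat -> V -> Prop).

Lemma strict_steps_le N M l c k : length_bounded_by N M l ->
  (forall i, is_submodule (c i)) -> (forall i, (i <= k)%N -> N `<=` c i) ->
  (forall i, (i <= k)%N -> c i `<=` M) -> (forall i, (i < k)%N -> c i `<=` c i.+1) ->
  (strict_steps c k <= l)%N.
Proof.
move=> bounded sub_c N_c c_M mono_c; apply: bounded.
have [d [d_c chain_d _]] := strict_steps_chain mono_c.
exists d; split; first by move=> r; have [i _ ->] := d_c r.
split; first by move=> r x _; have [i ik ->] := d_c r; apply: N_c.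
by split=> // r x _; have [i ik ->] := d_c r; apply: c_M.
Qed.

Lemma length_bounded_by_subr N M M' b : M' `<=` M ->
  length_bounded_by N M b -> length_bounded_by N M' b.
Proof.
move=> M'M bounded k [c [sub_c [N_c [c_M' chain_c]]]]; apply: bounded.
by exists c; split=> //; split=> //; split=> // i x ik cx; apply: M'M; apply: c_M' cx.
Qed.

Lemma length_bounded_by_zero H : H `<=` [set 0] -> length_bounded_by (@zero_sub R V) H 0.
Proof.
move=> H0 [|k] // [c [_ [zero_c [c_H chain_c]]]].
have [_ [x [c1x c0x]]] := chain_c 0%N (ltn0Sn k).
by case: c0x; apply: zero_c => //; apply: H0; apply: c_H c1x.
Qed.

Lemma length_bounded_by0_sub N M : is_submodule N -> is_submodule M ->
  N `<=` M -> length_bounded_by N M 0 -> M `<=` N.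
Proof.
move=> sub_N sub_M NM bounded x Mx; apply: contrapT => Nx.
have : (1 <= 0)%N; last by [].
apply: bounded; exists (fun i => if i == 0%N then N else M); split.
  by move=> [|i].
split; first by move=> [|i] y _ //; apply: NM.
split; first by move=> [|i] y _ //; apply: NM.
by move=> [|i] // _; split=> //; exists x.
Qed.

End Length.

Section KernelImage.
Variables (R : comNzRingType) (V W : lmodType R) (f : V -> W).
Hypothesis f_hom : Hom_sub f.

Lemma strict_step_ker_or_img c i : is_submodule (c i) -> is_submodule (c i.+1) ->
  c i `<=` c i.+1 -> strict_step c i ->
  strict_step (fun j => c j `&` [set x | f x = 0]) i \/ strict_step (fun j => f @` c j) i.
Proof.
move=> [_ [cD _]] sub_c1 c_mono [x [c1x cx]].
have [[y cy fyx]|fx_out] := pselect ((f @` c i) (f x)); last first.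
  by right; exists (f x); split=> //; exists x.
left; exists (x - y); split.
  split; last by rewrite /= homD // -scaleN1r homZ // scaleN1r fyx subrr.
  by have [_ [c1D _]] := sub_c1; apply: c1D => //; apply: submoduleN => //; apply: c_mono.
by move=> [cxy _]; apply: cx; rewrite -(subrK y x); apply: cD.
Qed.

Lemma length_bounded_ker_img H a b :
  length_bounded_by (@zero_sub R V) (H `&` [set x | f x = 0]) a ->
  length_bounded_by (@zero_sub R W) (f @` H) b ->
  length_bounded_by (@zero_sub R V) H (a + b).
Proof.
move=> bounded_ker bounded_img k [c [sub_c [zero_c [c_H chain_c]]]].
pose ker j := c j `&` [set x | f x = 0]; pose img j := f @` c j.
rewrite -(strict_steps_strict_chain chain_c).
apply: (@leq_trans (strict_steps ker k + strict_steps img k)); last apply: leq_add.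
  apply: strict_steps_le_add => i ik _.
  by have [c_mono c_step] := chain_c i ik; apply: strict_step_ker_or_img.
- apply: (strict_steps_le bounded_ker).
  + by move=> i; apply: hom_ker_submodule.
  + by move=> i ik _ ->; split; [apply: zero_c|apply: hom0].
  + by move=> i ik x [cx fx]; split=> //; apply: c_H cx.
  + by move=> i ik x [cx fx]; split=> //; apply: (chain_c i ik).1.
- apply: (strict_steps_le bounded_img).
  + by move=> i; apply: hom_image_submodule.
  + by move=> i ik _ ->; exists 0; [apply: zero_c|apply: hom0].
  + by move=> i ik _ [x cx <-]; exists x => //; apply: c_H cx.
  + by move=> i ik _ [x cx <-]; exists x => //; apply: (chain_c i ik).1.
Qed.

End KernelImage.

Lemma length_bounded_embed (R : comNzRingType) (V W : lmodType R) (N : W -> Prop) l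
  (f : nat -> V -> W) :
  length_bounded_by (@zero_sub R W) N l -> (forall p, Hom_sub (f p)) ->
  forall j H, (forall x, H x -> forall p, (p < j)%N -> N (f p x)) ->
  (forall x, H x -> (forall p, (p < j)%N -> f p x = 0) -> x = 0) ->
  length_bounded_by (@zero_sub R V) H (j * l).
Proof.
move=> bounded_N f_hom; elim=> [|j IHj] H H_N H_inj.
  by apply: length_bounded_by_zero => x Hx; apply: H_inj.
rewrite mulSnr; apply: (length_bounded_ker_img (f_hom j)).
  apply: IHj => [x [Hx _] p pj|x [Hx fjx] fx0]; first by apply: H_N => //; apply: ltnW.
  by apply: H_inj => // p; rewrite ltnS leq_eqVlt => /orP[/eqP->|] //; apply: fx0.
by apply: length_bounded_by_subr bounded_N => _ [x Hx <-]; apply: H_N.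
Qed.

Section LenQuot.
Variables (R : comNzRingType) (V : lmodType R).
Implicit Types (N M : V -> Prop).

Lemma len_quot_le N M b : length_bounded_by N M b -> ele (len_quot N M) (Some b).
Proof.
move=> bounded; rewrite /len_quot; case: pselect => [h|]; last by case; exists b.
by case: ex_minnP => b' _ /=; apply; apply/asboolP.
Qed.

Lemma len_quot_bounded N M b : len_quot N M = Some b -> length_bounded_by N M b.
Proof. by rewrite /len_quot; case: pselect => //= h [<-]; case: ex_minnP => b' /asboolP. Qed.

Lemma ele_len_quot_emul N M x y :
  (forall b l, x = Some b -> y = Some l -> length_bounded_by N M (b * l)) ->
  (x = Some 0%N -> length_bounded_by N M 0) -> (y = Some 0%N -> length_bounded_by N M 0) ->
  ele (len_quot N M) (emul x y).
Proof.
case: x => [[|b]|]; case: y => [[|l]|] //= bound_mul bound_x bound_y;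
  by [apply: len_quot_le; auto | case: len_quot].
Qed.

End LenQuot.

Section HomLength.
Variables (R : comNzRingType) (m : R -> Prop) (A L : lmodType R) (n t s : nat).
Hypotheses (noethR : noetherian_ring R) (localm : is_local_with m).
Hypothesis artA : artinian_module A.
Hypothesis mn_torsion0 : ideal_smul (ideal_pow m n) (torsion_m m) `<=` [set 0 : L].
Hypothesis mtA_stable : forall x : A,
  ideal_smul (ideal_pow m t) (@whole R A) x <-> ideal_smul (ideal_pow m t.+1) (@whole R A) x.
Hypothesis min_le_s : (minn n t <= s)%N.

Let idm : is_ideal m. Proof. by case: localm => [[]]. Qed.

Let mA := ideal_smul m (@whole R A).

Lemma hom_torsion (f : A -> L) x : Hom_sub f -> torsion_m m (f x).
Proof.
move=> f_hom; have [k mk_x] := artinian_torsion noethR localm artA x.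
by exists k => a mk_a; rewrite -(homZ f_hom) mk_x // hom0.
Qed.

Lemma hom_vanish_pow (f : A -> L) v : Hom_sub f ->
  ideal_smul (ideal_pow m n) (@whole R A) v -> f v = 0.
Proof.
move=> f_hom /(ideal_smul_hom f_hom) fv; apply: mn_torsion0.
by apply: ideal_smul_monor fv => _ [x _ <-]; apply: hom_torsion.
Qed.

Lemma ideal_pow_stable i :
  ideal_smul (ideal_pow m t) (@whole R A) `<=` ideal_smul (ideal_pow m (t + i)) (@whole R A).
Proof.
elim: i => [|i IHi] v; first by rewrite addn0.
move=> /mtA_stable; rewrite addnS !ideal_smul_powS //.
exact: ideal_smul_monor IHi v.
Qed.

Lemma hom_annihilated (f : A -> L) y : Hom_sub f -> annihilated_by m s (f y).
Proof.
move=> f_hom a ms_a; rewrite -(homZ f_hom); apply: (hom_vanish_pow f_hom).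
have : ideal_smul (ideal_pow m (minn n t)) (@whole R A) (a *: y).
  by apply: finsum_span1 => //; apply: ideal_pow_antitone idm min_le_s _ ms_a.
case: (leqP n t) => [//|/ltnW nt].
by move=> /(ideal_pow_stable (n - t)); rewrite subnKC.
Qed.

Let gens := greedy_chain (@whole R A) mA.
Let gen p := greedy_pick (@whole R A) (gens p).

Lemma gens_full b : length_bounded_by mA (@whole R A) b -> forall y, gens b y.
Proof.
move=> bounded y; apply: contrapT => gens_y.
have : (b.+1 <= b)%N; last by rewrite ltnn.
apply: bounded; exists gens; split; first exact/greedy_chain_submodule/ideal_smul_submodule.
split; first by move=> i x _; apply: greedy_chain_mono (leq0n i) x.
split=> // i ib; split; first exact: greedy_chainS.
apply: greedy_chain_grows; first exact: ideal_smul_submodule.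
by exists y; split=> // /(greedy_chain_mono (ib : (i <= b)%N)).
Qed.

(* A homomorphism killing the generators has image [I] with [I = m I],
   hence [I = m^n I = 0]. *)
Lemma hom_eq0_on_gens b (f : A -> L) : Hom_sub f -> (forall y, gens b y) ->
  (forall p, (p < b)%N -> f (gen p) = 0) -> f = 0.
Proof.
move=> f_hom gens_b f_gen.
have img_m : range f `<=` ideal_smul m (range f).
  have gens_img i : (i <= b)%N -> forall v, gens i v -> ideal_smul m (range f) (f v).
    elim: i => [_ v /(ideal_smul_hom f_hom)|i IHi ib _ [w [r [gens_w ->]]]].
      by apply: ideal_smul_monor => _ [x _ <-]; exists x.
    by rewrite homD // homZ // f_gen // scaler0 addr0; apply: IHi => //; apply: ltnW.
  by move=> _ [x _ <-]; apply: gens_img (gens_b x).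
apply/funext => x; apply: mn_torsion0.
apply: ideal_smul_monor (ideal_smul_pow_fix n idm img_m (ex_intro2 _ _ x I erefl)).
by move=> _ [y _ <-]; apply: hom_torsion.
Qed.

Lemma Hom_length_bounded b l : length_bounded_by mA (@whole R A) b ->
  length_bounded_by (@zero_sub R L) (annihilated_by m s) l ->
  length_bounded_by (@zero_sub R (A -> L)) (@Hom_sub R A L) (b * l).
Proof.
move=> bounded_top bounded_ann.
apply: (length_bounded_embed bounded_ann (f := fun p (g : A -> L) => g (gen p))) => //.
- by move=> g g_hom p _; apply: hom_annihilated.
- by move=> g g_hom; apply: hom_eq0_on_gens g_hom (gens_full bounded_top).
Qed.

Lemma Hom_length0_of_top : length_bounded_by mA (@whole R A) 0 ->
  length_bounded_by (@zero_sub R (A -> L)) (@Hom_sub R A L) 0.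
Proof.
move=> bounded_top; apply: length_bounded_by_zero => g g_hom.
exact: hom_eq0_on_gens g_hom (gens_full bounded_top) _.
Qed.

Lemma Hom_length0_of_ann : length_bounded_by (@zero_sub R L) (annihilated_by m s) 0 ->
  length_bounded_by (@zero_sub R (A -> L)) (@Hom_sub R A L) 0.
Proof.
move=> bounded_ann; apply: length_bounded_by_zero => g g_hom; apply/funext => y.
apply: (length_bounded_by0_sub _ (annihilated_by_submodule L m s) _ bounded_ann).
- exact: zero_submodule.
- by move=> _ -> a _; rewrite scaler0.
- exact: hom_annihilated.
Qed.

End HomLength.

Theorem theorem2p11 (R : comNzRingType) (m : R -> Prop)
  (A L : lmodType R) (n t s : nat) :
  noetherian_ring R ->
  is_local_with m ->
  artinian_module A ->
  (1 <= n)%N ->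
  (forall x, ideal_smul (ideal_pow m n) (torsion_m m) x -> x = 0 :> L) ->
  (forall x : A, ideal_smul (ideal_pow m t) (@whole R A) x <->
                 ideal_smul (ideal_pow m t.+1) (@whole R A) x) ->
  (minn n t <= s)%N ->
  ele (len_sub (@Hom_sub R A L))
      (emul (len_quot (ideal_smul m (@whole R A)) (@whole R A))
            (len_sub (annihilated_by m s : L -> Prop))).
Proof.
move=> noethR localm artA _ mn_torsion0 mtA_stable min_le_s.
apply: ele_len_quot_emul => [b l /len_quot_bounded top /len_quot_bounded ann|
                             /len_quot_bounded top|/len_quot_bounded ann].
- exact: Hom_length_bounded noethR localm artA mn_torsion0 mtA_stable min_le_s _ _ top ann.
- exact: Hom_length0_of_top noethR localm artA mn_torsion0 top.
- exact: Hom_length0_of_ann noethR localm artA mn_torsion0 mtA_stable min_le_s ann.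
Qed.
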